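(* Define $\rho:Q^4\to Q^4$ by $\rho(l)=l^{\perp}$, where $l$ is a projective line of $\mathbb{CP}^3$ and $l^\perp$ is its orthogonal with respect to $h$. Then $\{\rho,Q^4\}$ is a real structure. Its real set is a real quadric of signature $(2,4)$ and corresponds to the set of two-spheres contained in $S^3$ together with the points of $S^3$.
   Context: $\mathbb{H}$ denotes the quaternions, $\mathbb{H}=\mathbb{C}\oplus j\mathbb{C}$ with $\mathbb{C}=\mathrm{span}_{\mathbb{R}}\{1,i\}$; $\mathbb{H}^2$ is a right $\mathbb{H}$-vector space identified with $\mathbb{C}^4$; $\mathbb{HP}^1=\{v\mathbb{H}\}\cong S^4$, $\mathbb{CP}^3=\mathbb{P}(\mathbb{C}^4)$; the twistor fibre over $v\mathbb{H}$ is the projective line through $[v],[vj]$. $Q^4=\{[\alpha]\in\mathbb{P}(\Lambda^2\mathbb{C}^4):\alpha\wedge\alpha=0\}$, with $[v\wedge w]$ identified with the line of $\mathbb{CP}^3$ through $[v],[w]$; each such line is either a twistor fibre (a point of $S^4$) or the twistor lift of a round two-sphere with conformal structure. Fix an $\mathbb{H}$-basis $e_1,e_2$ of $\mathbb{H}^2$ and the quaternionic hermitian form $\mathfrak{h}(e_1a+e_2b,e_1c+e_2d)=\bar a d+\bar b c$ (matrix $\begin{pmatrix}0&1\\1&0\end{pmatrix}$); write $\mathfrak{h}=h+j\omega$ with $h,\omega$ $\mathbb{C}$-valued. Then $h$ is a hermitian form of signature $(2,2)$ on $\mathbb{C}^4$ and $\omega$ is an alternating complex bilinear form. $S^3=\{x\mathbb{H}:\mathfrak{h}(x,x)=0\}\subset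 S^4$ (in the chart $\{[e_1x+e_2]\}$ this is $\mathrm{Im}\,\mathbb{H}\cup\{\infty\}$). For a projective line $l$, $l^\perp=\mathbb{P}\{x\in\mathbb{C}^4:h(x,y)=0\ \forall y\in l\}$, again a projective line. A real structure on a complex manifold is an antiholomorphic involution; its real set is its fixed point set. *)

From HB Require Import structures.
From mathcomp Require Import all_boot all_order all_algebra.
From mathcomp Require Import reals.
From mathcomp Require Export complex.
Set Implicit Arguments. Unset Strict Implicit. Unset Printing Implicit Defensive.
Import Order.TTheory GRing.Theory Num.Theory.
Local Open Scope ring_scope.

Section Twistor.
Variable R : rcfType.
Local Notation C := R[i].

(* ---------- Quaternions  H = C (+) jC :  (z, w) represents z + j w ---------- *)
Record quat := Quat { qz : C; qw : C }.

Definition qadd (p q : quat) : quat := Quat (qz p + qz q) (qw p + qw q).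
(* (z1 + j w1)(z2 + j w2) = (z1 z2 - conj(w1) w2) + j (conj(z1) w2 + w1 z2),
   using  z j = j conj(z)  and  j^2 = -1 *)
Definition qmul (p q : quat) : quat :=
  Quat (qz p * qz q - conjc (qw p) * qw q) (conjc (qz p) * qw q + qw p * qz q).
Definition qconj (p : quat) : quat := Quat (conjc (qz p)) (- qw p).
Definition qj : quat := Quat 0 1.
Definition qzero : quat := Quat 0 0.

Definition o4 (n : nat) : 'I_4 := inord n.
(* v = e1 a + e2 b,  a = v0 + j v1,  b = v2 + j v3 *)
Definition qa (v : 'rV[C]_4) : quat := Quat (v 0 (o4 0)) (v 0 (o4 1)).
Definition qb (v : 'rV[C]_4) : quat := Quat (v 0 (o4 2)) (v 0 (o4 3)).
Definition of_H2 (a b : quat) : 'rV[C]_4 :=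
  \row_(k < 4) (if (k : nat) == 0%N then qz a else if (k : nat) == 1%N then qw a
                else if (k : nat) == 2%N then qz b else qw b).

Definition rmulj (v : 'rV[C]_4) : 'rV[C]_4 := of_H2 (qmul (qa v) qj) (qmul (qb v) qj).

Definition hq (x y : 'rV[C]_4) : quat :=
  qadd (qmul (qconj (qa x)) (qb y)) (qmul (qconj (qb x)) (qa y)).
(* h = C-component of hq (hq = h + j omega) *)
Definition hform (x y : 'rV[C]_4) : C := qz (hq x y).

(* the point vH of S^4 lies in S^3 *)
Definition inS3 (v : 'rV[C]_4) : Prop := hq v v = qzero.

(* a line is the row space of L : 'M_(2,4) with \rank L = 2 *)
Definition twistor_fibre (L : 'M[C]_(2,4)) : Prop :=
  forall v : 'rV[C]_4, (v <= L)%MS -> (rmulj v <= L)%MS.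

Definition is_perp (L M : 'M[C]_(2,4)) : Prop :=
  forall y : 'rV[C]_4, (y <= M)%MS <-> (forall x : 'rV[C]_4, (x <= L)%MS -> hform x y = 0).

(* ---------- Lambda^2 C^4 = C^6, basis e01,e02,e03,e12,e13,e23 ---------- *)
Definition pi1 (k : 'I_6) : 'I_4 := o4 (nth 0%N [:: 0; 0; 0; 1; 1; 2]%N k).
Definition pi2 (k : 'I_6) : 'I_4 := o4 (nth 0%N [:: 1; 2; 3; 2; 3; 3]%N k).
Definition o6 (n : nat) : 'I_6 := inord n.

(* Pluecker vector v /\ w of the rows v = L_0, w = L_1 *)
Definition pl (L : 'M[C]_(2,4)) : 'rV[C]_6 :=
  \row_(k < 6) (L 0 (pi1 k) * L 1 (pi2 k) - L 0 (pi2 k) * L 1 (pi1 k)).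

(* alpha /\ alpha = 2 * klein alpha * e0123 *)
Definition klein (a : 'rV[C]_6) : C :=
  a 0 (o6 0) * a 0 (o6 5) - a 0 (o6 1) * a 0 (o6 4) + a 0 (o6 2) * a 0 (o6 3).

Definition inQ4 (a : 'rV[C]_6) : Prop := a != 0 /\ klein a = 0.

Definition proj_eq (a b : 'rV[C]_6) : Prop := exists c : C, c != 0 /\ b = c *: a.

(* graph of rho : [a] = [v /\ w] (line l)  |->  [b] = l^perp *)
Definition rho (a b : 'rV[C]_6) : Prop :=
  exists L M : 'M[C]_(2,4), [/\ \rank L = 2%N, \rank M = 2%N, proj_eq (pl L) a,
                               is_perp L M & proj_eq (pl M) b].

Definition antilinear (s : 'rV[C]_6 -> 'rV[C]_6) : Prop :=
  forall (c : C) (x y : 'rV[C]_6), s (c *: x + y) = conjc c *: s x + s y.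

Definition sig24 (x : 'I_6 -> R) : R :=
  x (o6 0) ^+ 2 + x (o6 1) ^+ 2 - x (o6 2) ^+ 2 - x (o6 3) ^+ 2 - x (o6 4) ^+ 2 - x (o6 5) ^+ 2.

Definition rC (x : R) : C := (x%:C)%C.

End Twistor.

(** In Plücker coordinates the h-orthogonal of the line [v /\ w] has Plücker
    vector [sperp (v /\ w)], where [sperp] is an explicit antilinear involution
    of Lambda^2 C^4 with [klein (sperp a) = conj (klein a)].  Hence rho is the
    projectivisation of [sperp]: a well defined antiholomorphic involution of
    Q^4.  The fixed vectors of [sperp] form a real form spanned by six explicit
    vectors, on which the Klein form is the quadratic form of signature (2,4);
    and a point of P(Lambda^2 C^4) fixed by rho has a fixed representative,
    because [sperp a = t a] forces [|t| = 1], and then [(1 + t) a] (or [i a]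
    when [t = -1]) is fixed.  Finally a line [l] is fixed by rho iff
    [l = l^perp], i.e. [l] is h-isotropic, which by polarisation means that
    every vector of [l] is h-null: [l] lies over S^3. *)

From HB Require Import structures.
From mathcomp Require Import all_boot all_order all_algebra.
From mathcomp Require Import reals complex ring.
From Stdlib Require Import Classical.
Set Implicit Arguments. Unset Strict Implicit. Unset Printing Implicit Defensive.
Import Order.TTheory GRing.Theory Num.Theory.
Local Open Scope ring_scope.

Section TwistorRealStructure.
Variable R : rcfType.
Local Notation C := R[i].
Local Notation I := ('i%C : C).
Arguments conjc : simpl never.

(* Instances of the generic [rmorph*] lemmas whose right-hand sides keep the
   bare [conjc], so that [conjcK] still applies after rewriting. *)
Lemma conjcM (a b : C) : conjc (a * b) = conjc a * conjc b. Proof. exact: rmorphM. Qed.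
Lemma conjcD (a b : C) : conjc (a + b) = conjc a + conjc b. Proof. exact: rmorphD. Qed.
Lemma conjcB (a b : C) : conjc (a - b) = conjc a - conjc b. Proof. exact: rmorphB. Qed.
Lemma conjcN (a : C) : conjc (- a) = - conjc a. Proof. exact: rmorphN. Qed.

Ltac conjc_simpl := rewrite ?(conjcM, conjcD, conjcB, conjcN, conjc0, conjc1, conjcK).

Lemma o4K n : (n < 4)%N -> nat_of_ord (o4 n) = n.
Proof. by move=> h; rewrite /o4 inordK. Qed.

Lemma o6K n : (n < 6)%N -> nat_of_ord (o6 n) = n.
Proof. by move=> h; rewrite /o6 inordK. Qed.

Lemma o4_eq n m : (n < 4)%N -> (m < 4)%N -> (o4 n == o4 m) = (n == m).
Proof. by move=> hn hm; rewrite -val_eqE /= !o4K. Qed.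

Lemma ord2E (i : 'I_2) : i = 0 \/ i = 1.
Proof. by case: i => [[|[|n]] h]; [left|right|]; try apply: val_inj. Qed.

Lemma ord4E (i : 'I_4) : [\/ i = o4 0, i = o4 1, i = o4 2 | i = o4 3].
Proof.
case: i => [[|[|[|[|n]]]] h]; try (by []);
  [constructor 1|constructor 2|constructor 3|constructor 4]; apply: val_inj; by rewrite /= o4K.
Qed.

Lemma ord6E (i : 'I_6) :
  i = o6 0 \/ i = o6 1 \/ i = o6 2 \/ i = o6 3 \/ i = o6 4 \/ i = o6 5.
Proof.
case: i => [[|[|[|[|[|[|n]]]]]] h]; try (by []);
  [left|right;left|right;right;left|do 3 right; left|do 4 right; left|do 5 right];
  apply: val_inj; by rewrite /= o6K.
Qed.

Lemma sum_ord2 (F : 'I_2 -> C) : \sum_(i < 2) F i = F 0 + F 1.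
Proof. by rewrite big_ord_recl big_ord1; congr (_ + F _); apply: val_inj. Qed.

Lemma sum_ord4 (F : 'I_4 -> C) :
  \sum_(i < 4) F i = F (o4 0) + F (o4 1) + F (o4 2) + F (o4 3).
Proof.
rewrite !big_ord_recr big_ord0 /= add0r.
by congr (F _ + F _ + F _ + F _); apply: val_inj; rewrite /= o4K.
Qed.

Lemma sum_ord6 (F : 'I_6 -> C) : \sum_(i < 6) F i =
  F (o6 0) + F (o6 1) + F (o6 2) + F (o6 3) + F (o6 4) + F (o6 5).
Proof.
rewrite !big_ord_recr big_ord0 /= add0r.
by congr (F _ + F _ + F _ + F _ + F _ + F _); apply: val_inj; rewrite /= o6K.
Qed.

Lemma row_neq0_coord n (p : 'rV[C]_n) : p != 0 -> exists k, p 0 k != 0.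
Proof.
move=> h; case: (pickP (fun k => p 0 k != 0)) => [k hk|hn]; first by exists k.
by case/eqP: h; apply/rowP => k; rewrite [RHS]mxE; have := hn k => /negbFE/eqP ->.
Qed.

(** * Plücker coordinates *)

Definition minor2 (L : 'M[C]_(2,4)) (j k : 'I_4) : C := L 0 j * L 1 k - L 0 k * L 1 j.

Lemma plE L k : pl L 0 k = minor2 L (pi1 k) (pi2 k).
Proof. by rewrite mxE. Qed.

Lemma pi1E n : (n < 6)%N -> pi1 (o6 n) = o4 (nth 0%N [:: 0; 0; 0; 1; 1; 2]%N n).
Proof. by move=> h; rewrite /pi1 o6K. Qed.

Lemma pi2E n : (n < 6)%N -> pi2 (o6 n) = o4 (nth 0%N [:: 1; 2; 3; 2; 3; 3]%N n).
Proof. by move=> h; rewrite /pi2 o6K. Qed.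

Lemma minor2_swap L j k : minor2 L j k = - minor2 L k j.
Proof. rewrite /minor2; ring. Qed.

Lemma minor2_diag L j : minor2 L j j = 0.
Proof. rewrite /minor2; ring. Qed.

Lemma minor2_pl_scale (L L' : 'M[C]_(2,4)) c : pl L' = c *: pl L ->
  forall j k, minor2 L' j k = c * minor2 L j k.
Proof.
move=> h j k.
have e n : (n < 6)%N ->
    minor2 L' (pi1 (o6 n)) (pi2 (o6 n)) = c * minor2 L (pi1 (o6 n)) (pi2 (o6 n)).
  by move=> hn; rewrite -!plE h mxE.
have e0 := e 0%N erefl; have e1 := e 1%N erefl; have e2 := e 2%N erefl.
have e3 := e 3%N erefl; have e4 := e 4%N erefl; have e5 := e 5%N erefl.
rewrite !pi1E // !pi2E //= in e0 e1 e2 e3 e4 e5.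
case: (ord4E j) => ->; case: (ord4E k) => ->; rewrite ?minor2_diag ?mulr0 //;
  first [ done | by rewrite (minor2_swap L') (minor2_swap L) ?e0 ?e1 ?e2 ?e3 ?e4 ?e5 mulrN ].
Qed.

Lemma minor2_neq0_rank2 (L : 'M[C]_(2,4)) j k : minor2 L j k != 0 -> \rank L = 2%N.
Proof.
move=> hm.
have hkj : (k == j) = false.
  by apply/negbTE; apply: contraNneq hm => ->; rewrite minor2_diag.
set m := minor2 L j k.
pose B : 'M[C]_(4,2) := \matrix_(r, c) ((if r == j then (if c == 0 then L 1 k else - L 0 k)
   else if r == k then (if c == 0 then - L 1 j else L 0 j) else 0) / m).
suff : row_free L by move/eqP.
apply/row_freeP; exists B; apply/matrixP => i c.
rewrite !mxE (bigD1 j) //= (bigD1 k) ?hkj //= big1 ?addr0; last first.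
  by move=> r /andP [hr1 hr2]; rewrite mxE (negbTE hr1) (negbTE hr2) mul0r mulr0.
rewrite !mxE eqxx hkj.
have hm' : m != 0 by [].
by case: (ord2E i) => ->; case: (ord2E c) => -> /=; rewrite ?eqxx /m /minor2 in hm' *;
  field.
Qed.

Lemma pl_neq0_rank2 (L : 'M[C]_(2,4)) : pl L != 0 -> \rank L = 2%N.
Proof.
by move=> /row_neq0_coord [k]; rewrite plE; apply: minor2_neq0_rank2.
Qed.

Lemma rank2_pl_neq0 (L : 'M[C]_(2,4)) : \rank L = 2%N -> pl L != 0.
Proof.
move=> hr; apply/negP => /eqP h0.
have hmin j k : minor2 L j k = 0.
  by rewrite (@minor2_pl_scale L L 0) ?mul0r // h0 scale0r.
have hf : row_free L by rewrite /row_free hr.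
have [j hj | hn] := pickP (fun j => L 0 j != 0).
  pose w : 'rV[C]_2 := \row_c (if c == 0 then - L 1 j else L 0 j).
  have : w *m L == 0.
    apply/eqP/rowP => l; rewrite !mxE sum_ord2 !mxE /=.
    by have := hmin j l; rewrite /minor2 => e; rewrite -e; ring.
  rewrite mulmx_free_eq0 // => /eqP/rowP/(_ 1); rewrite !mxE /= => e.
  by rewrite e eqxx in hj.
pose w : 'rV[C]_2 := \row_c (if c == 0 then 1 else 0).
have : w *m L == 0.
  apply/eqP/rowP => l; rewrite !mxE sum_ord2 !mxE /=.
  by have := hn l => /negbFE/eqP ->; rewrite mul1r mul0r addr0.
by rewrite mulmx_free_eq0 // => /eqP/rowP/(_ 0); rewrite !mxE /= => /eqP; rewrite oner_eq0.
Qed.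

Lemma minor2_mulmx (D : 'M[C]_2) (L : 'M[C]_(2,4)) j k :
  minor2 (D *m L) j k = (D 0 0 * D 1 1 - D 0 1 * D 1 0) * minor2 L j k.
Proof. rewrite /minor2 !mxE !sum_ord2; ring. Qed.

Lemma pl_mulmx (D : 'M[C]_2) (L : 'M[C]_(2,4)) :
  pl (D *m L) = (D 0 0 * D 1 1 - D 0 1 * D 1 0) *: pl L.
Proof. by apply/rowP => k; rewrite plE [RHS]mxE plE minor2_mulmx. Qed.

Lemma submx_proj_eq_pl (L L' : 'M[C]_(2,4)) : (L' <= L)%MS -> \rank L' = 2%N ->
  proj_eq (pl L) (pl L').
Proof.
move=> /submxP [D ->] hr; exists (D 0 0 * D 1 1 - D 0 1 * D 1 0); split; last exact: pl_mulmx.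
by apply: contraTneq (rank2_pl_neq0 hr) => e; rewrite pl_mulmx e scale0r eqxx.
Qed.

(* Cramer's rule for [r] in the basis [u, v] of a plane containing [r] and [s]:
   the minors of [(r, s)] on the columns [j, k, l] are [c] times those of [(u, v)]. *)
Lemma coord_from_minors (c rj rk rl sj sk sl uj uk ul vj vk vl : C) :
  c != 0 -> uj * vk - uk * vj != 0 ->
  rj * sk - rk * sj = c * (uj * vk - uk * vj) -> rj * sl - rl * sj = c * (uj * vl - ul * vj) ->
  rk * sl - rl * sk = c * (uk * vl - ul * vk) ->
  rl = (rj * vk - rk * vj) / (uj * vk - uk * vj) * ul
       + (uj * rk - uk * rj) / (uj * vk - uk * vj) * vl.
Proof.
move=> hc hm e1 e2 e3; set d := uj * vk - uk * vj.
have h : c * (d * rl - (rj * vk - rk * vj) * ul - (uj * rk - uk * rj) * vl) = 0.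
  have -> : c * (d * rl - (rj * vk - rk * vj) * ul - (uj * rk - uk * rj) * vl) =
      rj * (c * (uk * vl - ul * vk)) - rk * (c * (uj * vl - ul * vj)) + rl * (c * d) by
    rewrite /d; ring.
  by rewrite -e1 -e2 -e3; ring.
move/eqP: h; rewrite mulf_eq0 (negbTE hc) /= => /eqP h.
apply/eqP; rewrite -subr_eq0; apply/eqP.
have -> : rl - ((rj * vk - rk * vj) / d * ul + (uj * rk - uk * rj) / d * vl)
    = (d * rl - (rj * vk - rk * vj) * ul - (uj * rk - uk * rj) * vl) / d by field.
by rewrite h mul0r.
Qed.

Lemma proj_eq_pl_submx (L L' : 'M[C]_(2,4)) : proj_eq (pl L) (pl L') -> \rank L = 2%N ->
  (L' <= L)%MS.
Proof.
move=> [c [hc e]] hr; have hm := minor2_pl_scale e.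
have [k] := row_neq0_coord (rank2_pl_neq0 hr).
rewrite plE; set j1 := pi1 k; set k1 := pi2 k; set m := minor2 L j1 k1 => hk.
apply/submxP.
exists (\matrix_(i, r) (if r == 0 then (L' i j1 * L 1 k1 - L' i k1 * L 1 j1) / m
                       else (L 0 j1 * L' i k1 - L 0 k1 * L' i j1) / m)).
apply/matrixP => i l; rewrite !mxE sum_ord2 !mxE /=.
have e1 := hm j1 k1; have e2 := hm j1 l; have e3 := hm k1 l.
rewrite /minor2 in e1 e2 e3 hk; rewrite /m /minor2.
case: (ord2E i) => ->; first exact: (coord_from_minors hc hk e1 e2 e3).
apply: (@coord_from_minors (- c) (L' 1 j1) (L' 1 k1) (L' 1 l) (L' 0 j1) (L' 0 k1) (L' 0 l));
  rewrite ?oppr_eq0 // mulNr; [rewrite -e1 | rewrite -e2 | rewrite -e3]; ring.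
Qed.

Lemma klein_pl (L : 'M[C]_(2,4)) : klein (pl L) = 0.
Proof. rewrite /klein !plE !pi1E // !pi2E //= /minor2; ring. Qed.

Lemma inQ4_pl (L : 'M[C]_(2,4)) : \rank L = 2%N -> inQ4 (pl L).
Proof. by move=> h; split; [exact: rank2_pl_neq0 | exact: klein_pl]. Qed.

(* The matrix of [p] viewed as a skew form on C^4, in the order of [pi1], [pi2]. *)
Definition skew (p : 'rV[C]_6) (l m : 'I_4) : C :=
  let c n := p 0 (o6 n) in
  match nat_of_ord l, nat_of_ord m with
  | 0%N, 1%N => c 0%N | 1%N, 0%N => - c 0%N
  | 0%N, 2%N => c 1%N | 2%N, 0%N => - c 1%N
  | 0%N, 3%N => c 2%N | 3%N, 0%N => - c 2%N
  | 1%N, 2%N => c 3%N | 2%N, 1%N => - c 3%N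
  | 1%N, 3%N => c 4%N | 3%N, 1%N => - c 4%N
  | 2%N, 3%N => c 5%N | 3%N, 2%N => - c 5%N
  | _, _ => 0 end.

(* Two rows of [skew p], i.e. the contractions of [p] with two basis covectors;
   on the Klein quadric they span the line [p] whenever [p_k != 0]. *)
Definition line_of (p : 'rV[C]_6) (k : 'I_6) : 'M[C]_(2,4) :=
  \matrix_(r, m) (if r == 0 then - skew p (pi2 k) m else skew p (pi1 k) m).

Lemma pl_line_of p k : klein p = 0 -> pl (line_of p k) = p 0 k *: p.
Proof.
move=> hk; apply/rowP => t; rewrite plE [RHS]mxE /minor2 !mxE /=.
case: (ord6E k) => [->|[->|[->|[->|[->|->]]]]];
case: (ord6E t) => [->|[->|[->|[->|[->|->]]]]];
rewrite !pi1E // !pi2E //= /skew !o4K //=;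
apply/eqP; rewrite -subr_eq0; apply/eqP;
first [ ring
      | (transitivity (klein p); [rewrite /klein; ring | exact hk])
      | (transitivity (- klein p); [rewrite /klein; ring | by rewrite hk oppr0]) ].
Qed.

Lemma line_ofP (p : 'rV[C]_6) (k : 'I_6) : p 0 k != 0 -> klein p = 0 ->
  \rank (line_of p k) = 2%N /\ proj_eq p (pl (line_of p k)).
Proof.
move=> hk hkl; have e := pl_line_of k hkl.
split; last by exists (p 0 k).
apply: pl_neq0_rank2; rewrite e scaler_eq0 negb_or hk /=.
by apply: contraNneq hk => ->; rewrite mxE.
Qed.

Implicit Types a b d : 'rV[C]_6.

Lemma proj_eq_refl a : proj_eq a a.
Proof. by exists 1; rewrite oner_eq0 scale1r. Qed.

Lemma proj_eq_sym a b : proj_eq a b -> proj_eq b a.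
Proof.
move=> [c [hc ->]]; exists c^-1; split; first by rewrite invr_eq0.
by rewrite scalerA mulVf // scale1r.
Qed.

Lemma proj_eq_trans a b d : proj_eq a b -> proj_eq b d -> proj_eq a d.
Proof.
move=> [c [hc ->]] [c' [hc' ->]]; exists (c' * c); split; first by rewrite mulf_neq0.
by rewrite scalerA.
Qed.

Lemma kleinZ c a : klein (c *: a) = c ^+ 2 * klein a.
Proof. rewrite /klein !mxE; ring. Qed.

Lemma inQ4_proj_eq a b : proj_eq a b -> inQ4 a -> inQ4 b.
Proof.
move=> [c [hc ->]] [ha hk]; split; first by rewrite scaler_eq0 negb_or hc.
by rewrite kleinZ hk mulr0.
Qed.

Lemma inQ4_line a : inQ4 a -> exists L : 'M[C]_(2,4), \rank L = 2%N /\ proj_eq (pl L) a.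
Proof.
move=> [ha hk]; have [k hk'] := row_neq0_coord ha.
have [h1 h2] := line_ofP hk' hk; exists (line_of a k); split => //; exact: proj_eq_sym.
Qed.

(** * The h-orthogonal of a line *)

Lemma hformE (x y : 'rV[C]_4) : hform x y =
  conjc (x 0 (o4 0)) * y 0 (o4 2) + conjc (x 0 (o4 1)) * y 0 (o4 3)
  + conjc (x 0 (o4 2)) * y 0 (o4 0) + conjc (x 0 (o4 3)) * y 0 (o4 1).
Proof. rewrite /hform /hq /= !rmorphN; ring. Qed.

(* The matrix of h is the permutation matrix of this involution of the indices. *)
Definition hswap (b : 'I_4) : 'I_4 := o4 (nth 0%N [:: 2; 3; 0; 1]%N b).

Definition hswap_mx : 'M[C]_4 := \matrix_(a, b) ((a == hswap b)%:R).

Definition hperp_mx (L : 'M[C]_(2,4)) : 'M[C]_(4,2) := \matrix_(b, i) conjc (L i (hswap b)).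

Lemma hform_row (L : 'M[C]_(2,4)) y i : hform (row i L) y = (y *m hperp_mx L) 0 i.
Proof. rewrite hformE !mxE sum_ord4 !mxE /hswap !o4K //=; ring. Qed.

Lemma hform_mulmxl (L : 'M[C]_(2,4)) (D : 'rV[C]_2) y :
  hform (D *m L) y = conjc (D 0 0) * hform (row 0 L) y + conjc (D 0 1) * hform (row 1 L) y.
Proof. rewrite !hformE !mxE !sum_ord2 !rmorphD !rmorphM; ring. Qed.

Lemma hperp_kermx (L : 'M[C]_(2,4)) y :
  (forall x, (x <= L)%MS -> hform x y = 0) <-> (y <= kermx (hperp_mx L))%MS.
Proof.
rewrite sub_kermx; split.
  move=> h; apply/eqP/rowP => i; rewrite [RHS]mxE -hform_row; apply: h; exact: row_sub.
by move=> /eqP h x /submxP [D ->]; rewrite hform_mulmxl !hform_row h !mxE; ring.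
Qed.

Lemma tr_hperp_mx (L : 'M[C]_(2,4)) : (hperp_mx L)^T = map_mx conjc L *m hswap_mx.
Proof.
apply/matrixP => i b; rewrite !mxE sum_ord4 !mxE.
by case: (ord4E b) => ->; rewrite /hswap !o4K //= !o4_eq //=; ring.
Qed.

Lemma hswap_mxK : hswap_mx *m hswap_mx = 1%:M.
Proof.
apply/matrixP => a b; rewrite !mxE sum_ord4 !mxE.
by case: (ord4E a) => ->; case: (ord4E b) => ->; rewrite /hswap !o4K //= !o4_eq //=; ring.
Qed.

Lemma mxrank_hperp_mx (L : 'M[C]_(2,4)) : \rank (hperp_mx L) = \rank L.
Proof.
rewrite -mxrank_tr tr_hperp_mx mxrankMfree ?mxrank_map //.
by apply/row_freeP; exists hswap_mx; exact: hswap_mxK.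
Qed.

Lemma mxrank_ker_hperp_mx (L : 'M[C]_(2,4)) :
  \rank L = 2%N -> \rank (kermx (hperp_mx L)) = 2%N.
Proof. by move=> h; rewrite mxrank_ker mxrank_hperp_mx h. Qed.

(** * The antilinear involution [sperp] of Lambda^2 C^4 *)

Definition sperp_idx (k : 'I_6) : 'I_6 := o6 (nth 0%N [:: 0; 4; 2; 3; 1; 5]%N k).
Definition sperp_sign (k : 'I_6) : C :=
  if ((k : nat) == 2%N) || ((k : nat) == 3%N) then -1 else 1.
Definition sperp (p : 'rV[C]_6) : 'rV[C]_6 :=
  \row_k (sperp_sign k * conjc (p 0 (sperp_idx k))).

Lemma sperp_antilinear : antilinear sperp.
Proof. by move=> c x y; apply/rowP => k; rewrite !mxE rmorphD rmorphM; ring. Qed.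

Lemma sperpZ c x : sperp (c *: x) = conjc c *: sperp x.
Proof. by apply/rowP => k; rewrite !mxE rmorphM; ring. Qed.

Lemma sperpK : involutive sperp.
Proof.
move=> x; apply/rowP => k; rewrite !mxE.
by case: (ord6E k) => [->|[->|[->|[->|[->|->]]]]];
  rewrite /sperp_sign /sperp_idx !o6K //= ?mxE ?o6K //=; conjc_simpl; ring.
Qed.

Lemma sperp_eq0 (p : 'rV[C]_6) : (sperp p == 0) = (p == 0).
Proof.
have sperp0 : sperp 0 = 0 by apply/rowP => k; rewrite !mxE conjc0 mulr0.
by apply/eqP/eqP => [h|->]; rewrite // -(sperpK p) h.
Qed.

Lemma klein_sperp x : klein (sperp x) = conjc (klein x).
Proof. by rewrite /klein !mxE /sperp_sign /sperp_idx !o6K //=; conjc_simpl; ring. Qed.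

Lemma inQ4_sperp a : inQ4 a -> inQ4 (sperp a).
Proof. by move=> [h1 h2]; split; [rewrite sperp_eq0 | rewrite klein_sperp h2 conjc0]. Qed.

Lemma proj_eq_sperp a b : proj_eq a b -> proj_eq (sperp a) (sperp b).
Proof.
move=> [c [hc ->]]; exists (conjc c); split; first by rewrite conjc_eq0.
by rewrite sperpZ.
Qed.

Lemma line_of_sperp_hperp (L : 'M[C]_(2,4)) k :
  (line_of (sperp (pl L)) k <= kermx (hperp_mx L))%MS.
Proof.
rewrite sub_kermx; apply/eqP/matrixP => r i; rewrite !mxE sum_ord4 !mxE.
case: (ord2E r) => ->; case: (ord2E i) => ->;
case: (ord6E k) => [->|[->|[->|[->|[->|->]]]]];
rewrite /= ?pi1E // ?pi2E //= /hswap /skew ?o4K //= ?mxE /sperp_sign /sperp_idx ?o6K //=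
  ?plE ?pi1E // ?pi2E //= /minor2; conjc_simpl; ring.
Qed.

Lemma hperp_line (L : 'M[C]_(2,4)) : \rank L = 2%N ->
  exists M, [/\ \rank M = 2%N, proj_eq (sperp (pl L)) (pl M) & is_perp L M].
Proof.
move=> hr; set q := sperp (pl L).
have hq : q != 0 by rewrite /q sperp_eq0; exact: rank2_pl_neq0.
have hkq : klein q = 0 by rewrite /q klein_sperp klein_pl conjc0.
have [k hk] := row_neq0_coord hq.
have [h1 h2] := line_ofP hk hkq.
exists (line_of q k); split => // y.
have hs := line_of_sperp_hperp L k.
have hsup : (kermx (hperp_mx L) <= line_of q k)%MS.
  by rewrite -(mxrank_leqif_sup hs).2 h1 mxrank_ker_hperp_mx.
rewrite hperp_kermx; split => hy; [exact: submx_trans hs | exact: submx_trans hsup].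
Qed.

Lemma is_perp_proj_eq_sperp (L M : 'M[C]_(2,4)) : \rank L = 2%N -> \rank M = 2%N ->
  is_perp L M -> proj_eq (sperp (pl L)) (pl M).
Proof.
move=> hL hM hp; have [M0 [h1 h2 h3]] := hperp_line hL.
apply: (proj_eq_trans h2); apply: submx_proj_eq_pl => //.
by apply/row_subP => i; apply/h3; apply/hp; exact: row_sub.
Qed.

Lemma rhoE a b : rho a b <-> inQ4 a /\ proj_eq (sperp a) b.
Proof.
split.
  move=> [L [M [hL hM h1 hp h2]]]; split; first exact: inQ4_proj_eq (inQ4_pl hL).
  apply: (proj_eq_trans (proj_eq_sym (proj_eq_sperp h1))); apply: proj_eq_trans h2.
  exact: is_perp_proj_eq_sperp.
move=> [ha hb]; have [L [hL e]] := inQ4_line ha.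
have [M0 [h1 h2 h3]] := hperp_line hL.
exists L, M0; split => //.
apply: proj_eq_trans hb; apply: proj_eq_trans (proj_eq_sym h2) _; exact: proj_eq_sperp.
Qed.

(** * The real form Fix(sperp) *)

Lemma conjc_i : conjc I = - I.
Proof. by apply/eqP; rewrite eq_complex /= oppr0 !eqxx. Qed.

Lemma conjc_rC (r : R) : conjc (rC r) = rC r.
Proof. exact: conjc_real. Qed.

Lemma i_neq0 : I != 0.
Proof. by apply/eqP => /eqP; rewrite eq_complex /= oner_eq0 andbF. Qed.

Lemma add_sub_eq0 (a b : C) : a + b = 0 -> a - b = 0 -> a = 0 /\ b = 0.
Proof.
move=> h1 h2; have h2n : (2 : C) != 0 by rewrite pnatr_eq0.
have ea : a = ((a + b) + (a - b)) / 2 by field.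
have eb : b = ((a + b) - (a - b)) / 2 by field.
by split; [rewrite ea | rewrite eb]; rewrite h1 h2 ?subr0 ?addr0 mul0r.
Qed.

Lemma conjc_fixed_real (z : C) : conjc z = z -> z = rC (complex.Re z).
Proof.
move=> h; rewrite {1}[z]complexE.
have -> : (complex.Im z)%:C%C = 0 by rewrite ImJ_sub h subrr !mul0r.
by rewrite mulr0 addr0.
Qed.

Lemma conjc_antifixed_imag (z : C) : - conjc z = z -> z = I * rC (complex.Im z).
Proof.
move=> h; rewrite {1}[z]complexE.
have -> : (complex.Re z)%:C%C = 0 by rewrite ReJ_add -{1}h addNr mul0r.
by rewrite add0r.
Qed.

Lemma conjcE (z : C) : conjc z = rC (complex.Re z) - I * rC (complex.Im z).
Proof. by rewrite {1}[z]complexE; conjc_simpl; rewrite conjc_i !conjc_rC /rC; ring. Qed.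

(* The basis [e01 + e23], [i (e03 - e12)], [e01 - e23], [i (e03 + e12)],
   [e02 + e13], [i (e02 - e13)] of Fix(sperp). *)
Definition rbasis_entry (k t : nat) : C :=
  match k, t with
  | 0%N, 0%N => 1 | 0%N, 5%N => 1 | 1%N, 2%N => I | 1%N, 3%N => - I
  | 2%N, 0%N => 1 | 2%N, 5%N => -1 | 3%N, 2%N => I | 3%N, 3%N => I
  | 4%N, 1%N => 1 | 4%N, 4%N => 1 | 5%N, 1%N => I | 5%N, 4%N => - I
  | _, _ => 0 end.

Definition rbasis (k : 'I_6) : 'rV[C]_6 := \row_t rbasis_entry k t.

Definition rcomb (x : 'I_6 -> R) : 'rV[C]_6 :=
  let y n := rC (x (o6 n)) in
  \row_t (match nat_of_ord t with
          | 0%N => y 0%N + y 2%N | 1%N => y 4%N + I * y 5%N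
          | 2%N => I * y 1%N + I * y 3%N | 3%N => - I * y 1%N + I * y 3%N
          | 4%N => y 4%N - I * y 5%N | _ => y 0%N - y 2%N end).

Lemma sum_rbasis (x : 'I_6 -> R) : \sum_(k < 6) rC (x k) *: rbasis k = rcomb x.
Proof.
apply/rowP => t; rewrite summxE sum_ord6 !mxE !o6K //.
by case: (ord6E t) => [->|[->|[->|[->|[->|->]]]]]; rewrite !o6K //=; ring.
Qed.

Lemma sperp_rbasis k : sperp (rbasis k) = rbasis k.
Proof.
apply/rowP => t; rewrite !mxE.
case: (ord6E k) => [->|[->|[->|[->|[->|->]]]]];
case: (ord6E t) => [->|[->|[->|[->|[->|->]]]]];
by rewrite /sperp_sign /sperp_idx !o6K //= ?mxE ?o6K //=; conjc_simpl; rewrite ?conjc_i; ring.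
Qed.

Lemma sperp_rcomb (x : 'I_6 -> R) : sperp (rcomb x) = rcomb x.
Proof.
apply/rowP => t; rewrite !mxE.
by case: (ord6E t) => [->|[->|[->|[->|[->|->]]]]];
  rewrite /sperp_sign /sperp_idx !o6K //= ?mxE ?o6K //=; conjc_simpl;
  rewrite ?conjc_i ?conjc_rC; ring.
Qed.

Lemma mxrank_rbasis : \rank (\matrix_(k < 6) rbasis k) = 6%N.
Proof.
suff : row_free (\matrix_(k < 6) rbasis k) by move/eqP.
apply: inj_row_free => w hw.
have e t : (w *m \matrix_(k < 6) rbasis k) 0 t = 0 by rewrite hw mxE.
have e0 := e (o6 0); have e1 := e (o6 1); have e2 := e (o6 2).
have e3 := e (o6 3); have e4 := e (o6 4); have e5 := e (o6 5).
move: e0 e1 e2 e3 e4 e5; rewrite !mxE !sum_ord6 !mxE !o6K //= ?mulr0 ?mulr1 ?addr0 ?add0r.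
rewrite mulrN1 => e0 e1 e2 e3 e4 e5.
have [h0 h2] := add_sub_eq0 e0 e5.
have e4' : w 0 (o6 4) - w 0 (o6 5) * I = 0 by rewrite -e4; ring.
have [h4 /eqP] := add_sub_eq0 e1 e4'.
rewrite mulf_eq0 (negbTE i_neq0) orbF => /eqP h5.
have e2' : w 0 (o6 3) + w 0 (o6 1) = 0.
  by apply: (mulIf i_neq0); rewrite mul0r -e2; ring.
have e3' : w 0 (o6 3) - w 0 (o6 1) = 0.
  by apply: (mulIf i_neq0); rewrite mul0r -e3; ring.
have [h3 h1] := add_sub_eq0 e2' e3'.
apply/rowP => k; rewrite [RHS]mxE.
by case: (ord6E k) => [->|[->|[->|[->|[->|->]]]]].
Qed.

Lemma rC_sig24 (x : 'I_6 -> R) : rC (sig24 x) = rC (x (o6 0)) ^+ 2 + rC (x (o6 1)) ^+ 2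
   - rC (x (o6 2)) ^+ 2 - rC (x (o6 3)) ^+ 2 - rC (x (o6 4)) ^+ 2 - rC (x (o6 5)) ^+ 2.
Proof. by rewrite /sig24 /rC !rmorphB !rmorphD !rmorphXn. Qed.

Lemma klein_rcomb (x : 'I_6 -> R) : klein (rcomb x) = rC (sig24 x).
Proof.
rewrite rC_sig24 /klein !mxE !o6K //=.
set y0 := rC (x (o6 0)); set y1 := rC (x (o6 1)); set y2 := rC (x (o6 2)).
set y3 := rC (x (o6 3)); set y4 := rC (x (o6 4)); set y5 := rC (x (o6 5)).
apply/eqP; rewrite -subr_eq0; apply/eqP.
transitivity ((I ^+ 2 + 1) * (y5 ^+ 2 - y1 ^+ 2 + y3 ^+ 2)); first ring.
by rewrite sqr_i addNr mul0r.
Qed.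

Definition rcoord (b : 'rV[C]_6) (k : 'I_6) : R :=
  let r n := complex.Re (b 0 (o6 n)) in let m n := complex.Im (b 0 (o6 n)) in
  match nat_of_ord k with
  | 0%N => (r 0%N + r 5%N) / 2 | 1%N => (m 2%N - m 3%N) / 2
  | 2%N => (r 0%N - r 5%N) / 2 | 3%N => (m 2%N + m 3%N) / 2
  | 4%N => r 1%N | _ => m 1%N end.

Lemma rcomb_rcoord b : sperp b = b -> rcomb (rcoord b) = b.
Proof.
move=> hb.
have f t : (sperp b) 0 t = b 0 t by rewrite hb.
have f0 := f (o6 0); have f2 := f (o6 2); have f3 := f (o6 3).
have f4 := f (o6 4); have f5 := f (o6 5).
rewrite !mxE /sperp_sign /sperp_idx !o6K //= ?mul1r ?mulN1r in f0 f2 f3 f4 f5.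
have h2R : (2 : R) != 0 by rewrite pnatr_eq0.
apply/rowP => t; rewrite mxE /rcoord.
case: (ord6E t) => [->|[->|[->|[->|[->|->]]]]]; rewrite !o6K //=.
- by rewrite [RHS](conjc_fixed_real f0) -rmorphD; congr rC; field.
- by rewrite [RHS]complexE.
- by rewrite [RHS](conjc_antifixed_imag f2) -mulrDr -rmorphD; congr (_ * rC _); field.
- rewrite [RHS](conjc_antifixed_imag f3) mulNr addrC -mulrBr -rmorphB.
  by congr (_ * rC _); field.
- by rewrite -f4 conjcE.
- by rewrite [RHS](conjc_fixed_real f5) -rmorphB; congr rC; field.
Qed.

Lemma rcoord_neq0 b : sperp b = b -> b != 0 -> exists k, rcoord b k != 0.
Proof.
move=> hb hb0; have [k hk | hn] := pickP (fun k => rcoord b k != 0); first by exists k.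
case/eqP: hb0; rewrite -(rcomb_rcoord hb); apply/rowP => t; rewrite !mxE.
have z n : rC (rcoord b (o6 n)) = 0.
  by have /negbFE/eqP -> := hn (o6 n); rewrite /rC rmorph0.
by case: (nat_of_ord t) => [|[|[|[|[|?]]]]]; rewrite !z ?mulr0 ?addr0 ?subr0.
Qed.

Lemma sperp_fixed_realP (a : 'rV[C]_6) : inQ4 a ->
  (proj_eq (sperp a) a <-> exists x : 'I_6 -> R,
      (exists k, x k != 0) /\ proj_eq (\sum_(k < 6) rC (x k) *: rbasis k) a).
Proof.
move=> [ha _]; split; last first.
  move=> [x [_ [c [hc ->]]]]; rewrite sum_rbasis.
  have hcc : conjc c != 0 by rewrite conjc_eq0.
  exists (c / conjc c); split; first by rewrite mulf_neq0 // invr_eq0.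
  by rewrite sperpZ sperp_rcomb scalerA mulfVK.
move=> [c [hc ea]]; set l := conjc c.
have hs : sperp a = l *: a by rewrite {1}ea sperpZ sperpK.
have hcl : c * l = 1.
  have : (c * l - 1) *: a = 0 by rewrite scalerBl scale1r -scalerA -hs -ea subrr.
  by move/eqP; rewrite scaler_eq0 (negbTE ha) orbF subr_eq0 => /eqP.
(* [conj l * l = 1], so [mu] below satisfies [conj mu * l = mu]. *)
pose mu := if l == -1 then I else 1 + l.
have [hmu hmu2] : mu != 0 /\ conjc mu * l = mu.
  rewrite /mu; have [->|hn] := eqVneq l (-1).
    by split; [exact: i_neq0 | rewrite conjc_i; ring].
  split; last by rewrite conjcD conjc1 /l conjcK mulrDl hcl mul1r addrC.
  by apply: contra hn => /eqP h; rewrite -subr_eq0 opprK addrC h.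
set b := mu *: a.
have hb : sperp b = b by rewrite /b sperpZ hs scalerA hmu2.
have hb0 : b != 0 by rewrite /b scaler_eq0 (negbTE hmu) (negbTE ha).
exists (rcoord b); split; first exact: rcoord_neq0.
rewrite sum_rbasis (rcomb_rcoord hb); exists mu^-1; split; first by rewrite invr_eq0.
by rewrite /b scalerA mulVf // scale1r.
Qed.

(** * Lines fixed by rho *)

Lemma hq_diag (v : 'rV[C]_4) : hq v v = Quat (hform v v) 0.
Proof.
have : qw (hq v v) = 0 by rewrite /hq /=; conjc_simpl; ring.
by rewrite /hform; case: (hq v v) => z w /= ->.
Qed.

Lemma inS3E (v : 'rV[C]_4) : inS3 v <-> hform v v = 0.
Proof. by rewrite /inS3 hq_diag; split => [[]|->]. Qed.

Lemma hformDD (x y : 'rV[C]_4) :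
  hform (x + y) (x + y) = hform x x + hform y y + hform x y + hform y x.
Proof. by rewrite !hformE !mxE; conjc_simpl; ring. Qed.

Lemma hformDiD (x y : 'rV[C]_4) :
  hform (x + I *: y) (x + I *: y) =
  hform x x + (- I * I) * hform y y + I * hform x y - I * hform y x.
Proof. by rewrite !hformE !mxE; conjc_simpl; rewrite conjc_i; ring. Qed.

Lemma hform_isotropic (L : 'M[C]_(2,4)) : (forall v, (v <= L)%MS -> hform v v = 0) ->
  forall x y, (x <= L)%MS -> (y <= L)%MS -> hform x y = 0.
Proof.
move=> h x y hx hy.
have e1 := hformDD x y; have e2 := hformDiD x y.
rewrite !h ?addmx_sub ?scalemx_sub // in e1 e2.
have s1 : hform x y + hform y x = 0 by rewrite e1; ring.
have s2 : hform x y - hform y x = 0 by apply: (mulfI i_neq0); rewrite mulr0 e2; ring.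
by have [] := add_sub_eq0 s1 s2.
Qed.

Lemma rho_pl_fixedP (L : 'M[C]_(2,4)) : \rank L = 2%N ->
  rho (pl L) (pl L) <-> forall v, (v <= L)%MS -> inS3 v.
Proof.
move=> hr; have [M [hM hpl hperp]] := hperp_line hr.
have fixed_sub : proj_eq (sperp (pl L)) (pl L) <-> (L <= M)%MS.
  split => H; first by apply: proj_eq_pl_submx hM; exact: proj_eq_trans (proj_eq_sym hpl) H.
  exact: proj_eq_trans hpl (submx_proj_eq_pl H hr).
have sub_null : (L <= M)%MS <-> (forall v, (v <= L)%MS -> hform v v = 0).
  split => H; first by move=> v hv; apply: (proj1 (hperp v) (submx_trans hv H)).
  apply/row_subP => i; apply/hperp => x hx.
  by apply: (hform_isotropic H hx); exact: row_sub.
rewrite rhoE fixed_sub sub_null; split => [[_ H] v hv | H]; first exact/inS3E/H.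
by split; [exact: inQ4_pl | move=> v hv; apply/inS3E/H].
Qed.

End TwistorRealStructure.

Theorem mainTheorem6 (R : realType) :
  (* rho : Q^4 -> Q^4 is well defined *)
  (forall L : 'M[R[i]]_(2,4), \rank L = 2%N ->
     exists M : 'M[R[i]]_(2,4), \rank M = 2%N /\ is_perp L M) /\
  (forall a : 'rV[R[i]]_6, inQ4 a -> exists b, rho a b) /\
  (forall a b : 'rV[R[i]]_6, rho a b -> inQ4 b) /\
  (forall a a' b b' : 'rV[R[i]]_6, rho a b -> rho a' b' -> proj_eq a a' -> proj_eq b b') /\
  (* rho is an involution *)
  (forall a b c : 'rV[R[i]]_6, rho a b -> rho b c -> proj_eq a c) /\
  (* rho is antiholomorphic: induced by an antilinear involution s of Lambda^2 C^4;
     its real set is the real quadric of signature (2,4) in the real form Fix(s) *)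
  (exists s : 'rV[R[i]]_6 -> 'rV[R[i]]_6,
     [/\ antilinear s, (forall x, s (s x) = x), (forall a, inQ4 a -> rho a (s a)) &
     exists (e : 'I_6 -> 'rV[R[i]]_6) (c : R[i]),
       [/\ c != 0, \rank (\matrix_(k < 6) e k) = 6%N, (forall k, s (e k) = e k),
           (forall x : 'I_6 -> R,
              klein (\sum_(k < 6) rC (x k) *: e k) = c * rC (sig24 x)) &
           (forall a, inQ4 a ->
              (rho a a <-> exists x : 'I_6 -> R,
                 (exists k, x k != 0) /\ proj_eq (\sum_(k < 6) rC (x k) *: e k) a))]]) /\
  (* fixed lines = points of S^3 (twistor fibres over S^3) and 2-spheres contained in S^3 *)
  (forall L : 'M[R[i]]_(2,4), \rank L = 2%N ->
     (rho (pl L) (pl L) <->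
        ((twistor_fibre L /\ forall v : 'rV[R[i]]_4, (v <= L)%MS -> inS3 v) \/
         (~ twistor_fibre L /\ forall v : 'rV[R[i]]_4, (v <= L)%MS -> inS3 v)))).
Proof.
have rho_sperp a : inQ4 a -> rho a (sperp a) by move=> ha; apply/rhoE; split; last exact: proj_eq_refl.
split; first by move=> L /hperp_line [M [hM _ hperp]]; exists M.
split; first by move=> a ha; exists (sperp a); exact: rho_sperp.
split; first by move=> a b /rhoE [ha hb]; exact: inQ4_proj_eq hb (inQ4_sperp ha).
split.
  move=> a a' b b' /rhoE [_ hb] /rhoE [_ hb'] haa'.
  exact: proj_eq_trans (proj_eq_sym hb) (proj_eq_trans (proj_eq_sperp haa') hb').
split.
  move=> a b c /rhoE [_ hb] /rhoE [_ hc].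
  by apply: proj_eq_trans hc; rewrite -[a]sperpK; exact: proj_eq_sperp.
split.
  exists (@sperp R); split; [exact: sperp_antilinear | exact: sperpK | exact: rho_sperp |].
  exists (@rbasis R), 1; split; [exact: oner_neq0 | exact: mxrank_rbasis |
    exact: sperp_rbasis | by move=> x; rewrite sum_rbasis klein_rcomb mul1r |].
  move=> a ha; rewrite -(sperp_fixed_realP ha) rhoE.
  by split => [[] | ] //; split.
move=> L hL; rewrite rho_pl_fixedP //.
split => [H | [[_ H] | [_ H]] //].
by have [ht | ht] := classic (twistor_fibre L); [left | right].
Qed.
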